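(* Let $n\ge 1$ and let $k_1,\ldots,k_n\ge 3$ be integers. The disjoint union of cycles $\bigcup_{i=1}^n C_{k_i}$ is odd prime.
   Context: All graphs are finite and simple. A graph $G$ of order $N$ is called odd prime if there is a bijection $\ell$ from $V(G)$ to the set of odd integers $\{1,3,\ldots,2N-1\}$ such that $\gcd(\ell(u),\ell(v))=1$ for every edge $uv$ of $G$. $C_k$ denotes the cycle on $k$ vertices. *)

From mathcomp Require Import all_boot all_order.
Set Implicit Arguments. Unset Strict Implicit. Unset Printing Implicit Defensive.

(* A simple graph is a symmetric irreflexive relation [adj] on a finType [V].
   It is odd prime if there is a bijection from V to the odd integers
   {1,3,...,2N-1} (N = #|V|) such that adjacent vertices get coprime labels.
   We encode the bijection as a bijection f : V -> 'I_N, the label of v being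
   2 * f v + 1. *)
Definition odd_label (V : finType) (f : V -> 'I_#|V|) (v : V) : nat :=
  (f v).*2.+1.

Definition odd_prime (V : finType) (adj : rel V) : Prop :=
  exists f : V -> 'I_#|V|, bijective f /\
    forall u v, adj u v -> coprime (odd_label f u) (odd_label f v).

Definition cycles_vertex (n : nat) (k : 'I_n -> nat) : finType :=
  {i : 'I_n & 'I_(k i)}.

Definition cycles_adj (n : nat) (k : 'I_n -> nat) : rel (cycles_vertex k) :=
  fun u v =>
    (tag u == tag v) &&
    ((val (tagged v) == (val (tagged u)).+1 %% k (tag u)) ||
     (val (tagged u) == (val (tagged v)).+1 %% k (tag u))).

Arguments cycles_vertex : clear implicits.
Arguments cycles_adj : clear implicits.

(* Number the cycles consecutively, giving cycle i a block of k_i consecutive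
   positions, and within a cycle place the vertices in zig-zag order
   0, 2, 4, ..., 5, 3, 1, so that neighbours on the cycle get positions that
   differ by 1 or 2.  The vertex at position p is labelled 2p + 1, hence
   neighbours get odd labels differing by 2 or 4, and odd numbers whose
   difference is a power of 2 are coprime. *)
From mathcomp Require Import all_boot all_order.
From mathcomp Require Import zify.
Set Implicit Arguments. Unset Strict Implicit. Unset Printing Implicit Defensive.

Lemma coprime_odd_addX a m : odd a -> coprime a (a + 2 ^ m).
Proof. by move=> odd_a; rewrite /coprime gcdnDl; apply: coprimeXr; rewrite coprimen2. Qed.

Lemma coprime_odd_double_near a b :
  a != b -> a <= b.+2 -> b <= a.+2 -> coprime a.*2.+1 b.*2.+1.
Proof.
have coprime_step c d : 0 < d <= 2 -> coprime c.*2.+1 (c + d).*2.+1.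
  move=> d_bounds; have -> : (c + d).*2.+1 = c.*2.+1 + 2 ^ d.
    by case: d d_bounds => [|[|[|d]]] //= _; lia.
  by apply: coprime_odd_addX; rewrite /= odd_double.
case: (ltngtP a b) => // lt_ab _ ? ?.
  by rewrite -(subnKC (ltnW lt_ab)); apply: coprime_step; lia.
by rewrite coprime_sym -(subnKC (ltnW lt_ab)); apply: coprime_step; lia.
Qed.

Definition zigzag (k j : nat) : nat :=
  if j.*2 < k then j.*2 else (k.-1 - j).*2.+1.

Lemma zigzag_lt k j : j < k -> zigzag k j < k.
Proof. by rewrite /zigzag; case: ifP; lia. Qed.

Lemma zigzag_inj k j j' : j < k -> j' < k -> zigzag k j = zigzag k j' -> j = j'.
Proof. by rewrite /zigzag; case: ifP; case: ifP; lia. Qed.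

Lemma zigzag_succ_near k j : 2 <= k -> j < k ->
  let a := zigzag k j in let b := zigzag k (j.+1 %% k) in
  [/\ a != b, a <= b.+2 & b <= a.+2].
Proof.
move=> k_ge2 lt_jk /=; have [lt_j1k|le_kj1] := ltnP j.+1 k.
  by rewrite modn_small // /zigzag; case: ifP; case: ifP; split; lia.
have -> : j.+1 = k by lia.
by rewrite modnn /zigzag; case: ifP; case: ifP; split; lia.
Qed.

Section Blocks.

Variables (n : nat) (k : 'I_n -> nat).

Definition block_start (m : nat) : nat := \sum_(l < n | l < m) k l.

Lemma block_start_add_le (i : 'I_n) m : i < m -> block_start i + k i <= block_start m.
Proof.
move=> lt_im; rewrite [block_start m](bigID (fun l : 'I_n => l < i)) /=.
rewrite leq_add //.
  apply/eq_leq/eq_bigl => l; case: (ltnP l i) => lt_li; rewrite ?andbF ?andbT //.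
  by rewrite (ltn_trans lt_li lt_im).
by rewrite (bigD1 i) ?ltnn ?lt_im //= leq_addr.
Qed.

Lemma block_start_ord : block_start n = \sum_(l < n) k l.
Proof. by apply: eq_bigl => l; rewrite ltn_ord. Qed.

Lemma block_start_inj (i i' : 'I_n) p p' : p < k i -> p' < k i' ->
  block_start i + p = block_start i' + p' -> i = i'.
Proof.
move=> lt_p lt_p' eq_pos; apply: val_inj.
case: (ltngtP i i') => [lt_ii'|lt_i'i|//].
  by have := block_start_add_le lt_ii'; lia.
by have := block_start_add_le lt_i'i; lia.
Qed.

End Blocks.

Lemma card_cycles_vertex n (k : 'I_n -> nat) : #|cycles_vertex n k| = block_start k n.
Proof.
rewrite card_tagged sumnE big_map big_enum block_start_ord.
by apply: eq_bigr => i _; rewrite card_ord.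
Qed.

Section CyclesLabelling.

Variables (n : nat) (k : 'I_n -> nat).

Definition cycles_position (v : cycles_vertex n k) : nat :=
  block_start k (tag v) + zigzag (k (tag v)) (tagged v).

Lemma cycles_position_lt v : cycles_position v < #|cycles_vertex n k|.
Proof.
case: v => i j; rewrite card_cycles_vertex /cycles_position /=.
have := zigzag_lt (ltn_ord j); have := block_start_add_le k (ltn_ord i); lia.
Qed.

Definition cycles_rank (v : cycles_vertex n k) : 'I_#|cycles_vertex n k| :=
  Ordinal (cycles_position_lt v).

Lemma cycles_rank_inj : injective cycles_rank.
Proof.
move=> [i j] [i' j'] /(congr1 val); rewrite /= /cycles_position /= => eq_pos.
have eq_ii' := block_start_inj (zigzag_lt (ltn_ord j)) (zigzag_lt (ltn_ord j')) eq_pos.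
subst i'; rewrite (val_inj (zigzag_inj (ltn_ord j) (ltn_ord j') _)) //; lia.
Qed.

Lemma cycles_adj_coprime : (forall i, 2 <= k i) -> forall u v,
  cycles_adj n k u v -> coprime (cycles_position u).*2.+1 (cycles_position v).*2.+1.
Proof.
move=> k_ge2 [i j] [i' j'] /andP [/= /eqP eq_ii']; subst i'.
rewrite /cycles_position /= => /orP [] /eqP succ.
  have := zigzag_succ_near (k_ge2 i) (ltn_ord j); rewrite -succ => -[? ? ?].
  by apply: coprime_odd_double_near; lia.
have := zigzag_succ_near (k_ge2 i) (ltn_ord j'); rewrite -succ => -[? ? ?].
by apply: coprime_odd_double_near; lia.
Qed.

End CyclesLabelling.

Theorem theorem3p1 (n : nat) (k : 'I_n -> nat) :
  1 <= n -> (forall i, 3 <= k i) -> odd_prime (cycles_adj n k).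
Proof.
move=> _ k_ge3; exists (@cycles_rank n k); split.
  by apply: inj_card_bij (@cycles_rank_inj n k) _; rewrite card_ord.
by apply: cycles_adj_coprime => i; apply: leq_trans (k_ge3 i).
Qed.
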